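(* Let $X$ be a compact metric space and $f\colon X\to X$ continuous with $h_{\mathrm{top}}(f)<\infty$. Let $\Xi=(\xi_1,\dots,\xi_d)\in C(X)^d$ and $\varepsilon>0$ be such that $\overline{B(0,\varepsilon)}\subset\{\int\Xi\,d\mu\mid\mu\in\mathcal{M}^f(X)\}$, and let $\xi_0\in C(X)$. Write $P_0:=\inf_{q\in\mathbb{R}^d}P(\langle q,\Xi\rangle+\xi_0)$. Then (1) for every $q\in\mathbb{R}^d$ with $\|q\|>\frac1\varepsilon(P(\xi_0)+\|\xi_0\|)$, we have $P(\langle q,\Xi\rangle+\xi_0)>P_0$; (2) there exists $\bar q$ with $\|\bar q\|\le\frac1\varepsilon(P(\xi_0)+\|\xi_0\|)$ such that $P(\langle\bar q,\Xi\rangle+\xi_0)=P_0$.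
   Context: $\mathcal{M}^f(X)$ is the set of $f$-invariant Borel probability measures; $P$ is topological pressure on $X$; $\|\xi_0\|$ the sup norm, $\|q\|$ the Euclidean norm; $\int\Xi\,d\mu=(\int\xi_id\mu)_i$; $\langle q,\Xi\rangle=\sum_iq_i\xi_i$; $\overline{B(0,\varepsilon)}$ is the closed Euclidean ball. *)

From HB Require Import structures.
From mathcomp Require Import all_boot all_order all_algebra.
From mathcomp Require Import all_classical all_reals all_analysis.
Set Implicit Arguments. Unset Strict Implicit. Unset Printing Implicit Defensive.
Import Order.TTheory GRing.Theory Num.Theory.
Import numFieldNormedType.Exports.
Local Open Scope classical_set_scope.
Local Open Scope ring_scope.

(* metric spaces carrying a distinguished point (needed because measurable
   types in MathComp-Analysis are pointed) *)
#[short(type="pmetricType")]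
HB.structure Definition PointedMetric (K : numDomainType) :=
  { M of Pointed M & Metric K M }.

Section Pressure.
Variables (R : realType) (X : pmetricType R) (f : X -> X).

Definition birkhoff (phi : X -> R) (n : nat) (x : X) : R :=
  \sum_(k < n) phi (iter k f x).

Definition separated (n : nat) (eps : R) (E : seq X) : Prop :=
  uniq E /\ forall x y, x \in E -> y \in E -> x != y ->
    exists2 k, (k < n)%N & eps < mdist (iter k f x) (iter k f y).

Definition elog (z : \bar R) : \bar R :=
  match z with
  | r%:E => (ln r)%:E
  | +oo%E => +oo%E
  | -oo%E => -oo%E
  end.

Definition partition_sum (phi : X -> R) (n : nat) (eps : R) : \bar R :=
  ereal_sup [set (\sum_(x <- E) expR (birkhoff phi n x))%:E | E in separated n eps].

Definition pressure_eps (phi : X -> R) (eps : R) : \bar R :=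
  limn_esup (fun n => ((n%:R)^-1)%:E * elog (partition_sum phi n eps))%E.

(* P(phi) = lim_{eps -> 0} pressure_eps phi eps; the map eps |-> pressure_eps
   is nonincreasing, so this limit is the supremum over eps > 0. *)
Definition pressure (phi : X -> R) : \bar R :=
  ereal_sup [set pressure_eps phi eps | eps in [set e : R | 0 < e]].

Definition htop : \bar R := pressure (fun=> 0).

Definition borel_of := g_sigma_algebraType (@open X).

Definition invariant_measure (mu : probability borel_of R) : Prop :=
  forall A : set borel_of, measurable A -> mu (f @^-1` A) = mu A.

End Pressure.

Definition eucl_norm (R : realType) (d : nat) (q : 'rV[R]_d) : R :=
  Num.sqrt (\sum_(i < d) q ord0 i ^+ 2).

Definition sup_norm (R : realType) (X : Type) (g : X -> R) : R :=
  sup [set `|g x| | x in [set: X]].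

Definition qdot (R : realType) (X : Type) (d : nat) (q : 'rV[R]_d)
  (Xi : 'I_d -> X -> R) (x : X) : R :=
  \sum_(i < d) q ord0 i * Xi i x.

(* An invariant measure [mu] bounds the pressure from below, [P(phi) >= int phi dmu]: at a
   point where the Birkhoff sum [S_n phi] is maximal it is at least [n * int phi dmu], and a
   single orbit segment already counts in the partition sum.  Choosing [mu] with
   [int Xi dmu = eps q / |q|] gives [P(<q,Xi> + xi0) >= eps |q| - ||xi0||], which exceeds
   [P(xi0)] as soon as [|q| > (P(xi0) + ||xi0||) / eps].  Since [h_top(f) < oo], the map
   [q |-> P(<q,Xi> + xi0)] is finite, and it is Lipschitz with constant [sum_i ||xi_i||];
   so it attains its minimum on that closed ball, and this minimum is the global infimum. *)
From Pilot Require Import Defs.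
From HB Require Import structures.
From mathcomp Require Import all_boot all_order all_algebra.
From mathcomp Require Import all_classical all_reals all_analysis.
Set Implicit Arguments. Unset Strict Implicit. Unset Printing Implicit Defensive.
Import Order.TTheory GRing.Theory Num.Theory.
Import numFieldNormedType.Exports.
Local Open Scope classical_set_scope.
Local Open Scope ring_scope.

Section ereal_bounds.
Variable R : realType.
Local Open Scope ereal_scope.

Lemma limn_esup_ge (u : (\bar R)^nat) (c : \bar R) :
  (forall n, (0 < n)%N -> c <= u n) -> c <= limn_esup u.
Proof.
move=> cu; apply: le_ereal_inf_tmp => _ [V [N _ NV] <-].
apply: le_trans (cu (maxn N 1) _) _; first by rewrite leq_max orbT.
by apply: ereal_sup_ubound; exists (maxn N 1) => //; apply: NV; rewrite /= leq_maxl.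
Qed.

Lemma limn_esup_leD (u v : (\bar R)^nat) (c : R) :
  (forall n, (0 < n)%N -> u n <= v n + c%:E) ->
  limn_esup u <= limn_esup v + c%:E.
Proof.
move=> uv; rewrite -leeBlDr //.
apply: le_ereal_inf_tmp => _ [V [N _ NV] <-]; rewrite leeBlDr //.
apply: (@le_trans _ _ (ereal_sup (u @` [set n | (maxn N 1 <= n)%N]))).
  by apply: ereal_inf_lbound; exists [set n | (maxn N 1 <= n)%N] => //; exists (maxn N 1).
apply: ge_ereal_sup => _ [n Nn <-].
apply: le_trans (uv n _) _; first by apply: leq_trans Nn; rewrite leq_maxr.
apply: leeD2r; apply: ereal_sup_ubound; exists n => //; apply: NV.
by apply: leq_trans Nn; rewrite leq_maxl.
Qed.

Lemma ln_le_elog (a : R) (z : \bar R) : (0 < a)%R -> a%:E <= z -> (ln a)%:E <= elog z.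
Proof.
case: z => [r| |] //= a_gt0; rewrite ?lee_fin ?leey // => ar.
by rewrite ler_ln // posrE; exact: lt_le_trans ar.
Qed.

Lemma le_elog (z1 z2 : \bar R) : 0 < z1 -> z1 <= z2 -> elog z1 <= elog z2.
Proof.
case: z1 => [r| |] //= r_gt0 z12; first exact: ln_le_elog.
by move: z12; rewrite leye_eq => /eqP ->.
Qed.

Lemma elogZ (k : R) (z : \bar R) : (0 < k)%R -> 0 < z ->
  elog (k%:E * z) = (ln k)%:E + elog z.
Proof.
move=> k_gt0; case: z => [r| |] //= r_gt0.
  by rewrite -EFinD lnM // posrE // -lte_fin.
by rewrite gt0_muley ?lte_fin // addey.
Qed.

End ereal_bounds.

Section pressure_bounds.
Variables (R : realType) (X : pmetricType R) (f : X -> X).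
Local Open Scope ereal_scope.

Lemma separated1 n e (x : X) : Defs.separated f n e [:: x].
Proof. by split => // a b; rewrite !inE => /eqP -> /eqP ->; rewrite eqxx. Qed.

Lemma partition_sum_ge phi n e (x : X) :
  (expR (birkhoff f phi n x))%:E <= partition_sum f phi n e.
Proof.
apply: ereal_sup_ubound; exists [:: x]; first exact: separated1.
by rewrite big_seq1.
Qed.

Lemma partition_sum_gt0 phi n e : 0 < partition_sum f phi n e.
Proof.
by apply: lt_le_trans (partition_sum_ge phi n e point); rewrite lte_fin expR_gt0.
Qed.

Lemma pressure_ge phi (c : R) :
  (forall n, (0 < n)%N -> exists x, (n%:R * c <= birkhoff f phi n x)%R) ->
  c%:E <= pressure f phi.
Proof.
move=> birkhoff_ge.
apply: (@le_trans _ _ (pressure_eps f phi 1%R)); last first.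
  by apply: ereal_sup_ubound; exists 1%R => //; exact: ltr01.
apply: limn_esup_ge => n n_gt0; have [x xn] := birkhoff_ge n n_gt0.
have lnZ : (n%:R * c)%:E <= elog (partition_sum f phi n 1%R).
  apply: (@le_trans _ _ (ln (expR (birkhoff f phi n x)))%:E).
    by rewrite expRK lee_fin.
  by apply: ln_le_elog; [exact: expR_gt0 | exact: partition_sum_ge].
have -> : c%:E = (n%:R^-1)%:E * (n%:R * c)%:E.
  by rewrite -EFinM mulrA mulVf ?mul1r // pnatr_eq0 -lt0n.
by apply: lee_wpmul2l => //; rewrite lee_fin invr_ge0 ler0n.
Qed.

Lemma pressure_ge_cst (phi : X -> R) (c : R) : (forall x, c <= phi x)%R ->
  c%:E <= pressure f phi.
Proof.
move=> c_le; apply: pressure_ge => n _; exists point.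
rewrite /birkhoff -[n in (n%:R * _)%R]card_ord mulr_natl -sumr_const.
by apply: ler_sum => k _.
Qed.

Lemma birkhoff_leD (phi psi : X -> R) (c : R) n x :
  (forall x, phi x <= psi x + c)%R ->
  (birkhoff f phi n x <= birkhoff f psi n x + n%:R * c)%R.
Proof.
move=> le_phi; rewrite /birkhoff -[n in (n%:R * _)%R]card_ord mulr_natl.
by rewrite -sumr_const -big_split; apply: ler_sum => k _.
Qed.

Lemma partition_sum_leZ (phi psi : X -> R) (c : R) n e :
  (forall x, phi x <= psi x + c)%R ->
  partition_sum f phi n e <= (expR (n%:R * c))%:E * partition_sum f psi n e.
Proof.
move=> le_phi; apply: ge_ereal_sup => _ [E sepE <-].
apply: (@le_trans _ _ ((expR (n%:R * c))%:E *
                       (\sum_(x <- E) expR (birkhoff f psi n x))%:E)).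
  rewrite -EFinM lee_fin mulr_sumr; apply: ler_sum => x _.
  by rewrite -expRD ler_expR addrC; exact: birkhoff_leD.
by apply: lee_wpmul2l; [rewrite lee_fin expR_ge0 | apply: ereal_sup_ubound; exists E].
Qed.

Lemma pressure_leD (phi psi : X -> R) (c : R) : (forall x, phi x <= psi x + c)%R ->
  pressure f phi <= pressure f psi + c%:E.
Proof.
move=> le_phi; apply: ge_ereal_sup => _ [e e_gt0 <-].
apply: (@le_trans _ _ (pressure_eps f psi e + c%:E)); last first.
  by apply: leeD2r; apply: ereal_sup_ubound; exists e.
apply: limn_esup_leD => n n_gt0.
have n_neq0 : (n%:R != 0 :> R)%R by rewrite pnatr_eq0 -lt0n.
have lnZ : elog (partition_sum f phi n e) <=
           (n%:R * c)%:E + elog (partition_sum f psi n e).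
  rewrite -{1}(expRK (n%:R * c)%R) -elogZ ?expR_gt0 ?partition_sum_gt0 //.
  by apply: le_elog; [exact: partition_sum_gt0 | exact: partition_sum_leZ].
apply: le_trans (lee_wpmul2l _ lnZ) _; first by rewrite lee_fin invr_ge0 ler0n.
by rewrite muleDr // -EFinM mulrA mulVf // mul1r addeC.
Qed.

End pressure_bounds.

Section continuity.
Variables (R : realType) (T : topologicalType).

Lemma continuous_sum (I : Type) (s : seq I) (F : I -> T -> R) :
  (forall i, continuous (F i)) -> continuous (fun x => \sum_(i <- s) F i x).
Proof. by move=> cF; apply: continuous_big => //; exact: add_continuous. Qed.

Variable f : T -> T.
Hypothesis cf : continuous f.

Lemma continuous_iter k : continuous (iter k f).
Proof.
elim: k => [x|k IH x /=]; first exact: cvg_id.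
by apply: continuous_comp; [exact: IH | exact: cf].
Qed.

Lemma continuous_comp_iter (g : T -> R) k : continuous g ->
  continuous (fun x => g (iter k f x)).
Proof. by move=> cg x; apply: continuous_comp; [exact: continuous_iter | exact: cg]. Qed.

End continuity.

Lemma continuous_birkhoff (R : realType) (X : pmetricType R) (f : X -> X)
  (g : X -> R) n : continuous f -> continuous g -> continuous (birkhoff f g n).
Proof.
by move=> cf cg; apply: continuous_sum => k; exact: continuous_comp_iter.
Qed.

Section borel_measurability.
Variables (R : realType) (X : pmetricType R).

Lemma continuous_measurable (g : X -> R) : continuous g ->
  measurable_fun [set: borel_of X] (g : borel_of X -> R).
Proof.
move=> cg; apply: (measurability _ (measurable_realfun.RGenOpens.measurableE R)).
move=> _ [_ [a [b ->] <-]]; rewrite setTI; apply: sub_sigma_algebra.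
by apply: (proj1 (continuousP _) cg); exact: interval_open.
Qed.

Lemma continuous_measurable_map (f : X -> X) : continuous f ->
  measurable_fun [set: borel_of X] (f : borel_of X -> borel_of X).
Proof.
move=> cf; apply: (measurability _ (erefl : @measurable _ (borel_of X) = <<s @open X >>)).
move=> _ [A oA <-]; rewrite setTI; apply: sub_sigma_algebra.
exact: (proj1 (continuousP _) cf).
Qed.

End borel_measurability.

Section compact_space.
Variables (R : realType) (X : pmetricType R).
Hypothesis cX : compact [set: X].

Lemma continuous_bounded (g : X -> R) : continuous g ->
  exists M, forall x, `|g x| <= M.
Proof.
move=> cg; have : compact (g @` [set: X]).
  by apply: continuous_compact => //; exact: continuous_subspaceT.
move=> /compact_bounded [M [_ gM]]; exists (M + 1) => x.
by apply: (gM (M + 1)); [rewrite ltrDl | exists x].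
Qed.

Lemma sup_norm_ge (g : X -> R) : continuous g -> forall x, `|g x| <= sup_norm g.
Proof.
move=> cg x; have [M gM] := continuous_bounded cg.
apply: sup_upper_bound; last by exists x.
by split; [exists `|g x|, x | exists M => _ [y _ <-]].
Qed.

Lemma continuous_integrable (mu : probability (borel_of X) R) (g : X -> R) :
  continuous g -> mu.-integrable [set: borel_of X] (EFin \o (g : borel_of X -> R)).
Proof.
move=> cg; apply: measurable_bounded_integrable => //.
- exact: (le_lt_trans (probability_le1 mu measurableT) (ltry 1)).
- exact: continuous_measurable.
have [M gM] := continuous_bounded cg.
by exists M; split; [exact: num_real | move=> y My x _; exact: le_trans (gM x) (ltW My)].
Qed.

Local Open Scope ereal_scope.

Lemma integral_probability_cst (mu : probability (borel_of X) R) (c : R) :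
  \int[mu]_x c%:E = c%:E.
Proof.
by rewrite integral_cst // [X in (_ * X)](_ : _ = 1) ?mule1 //; exact: probability_setT.
Qed.

Lemma integral_le_max (mu : probability (borel_of X) R) (g : X -> R) :
  continuous g -> exists x, \int[mu]_y (g y)%:E <= (g x)%:E.
Proof.
move=> cg.
have [xm _ gxm] := compact_EVT_max (ex_intro _ point I) cX (continuous_subspaceT cg).
exists xm; rewrite -(integral_probability_cst mu).
apply: le_integral => //.
- exact: continuous_integrable.
- by apply: continuous_integrable; exact: cst_continuous.
Qed.

Lemma integral_ge_cst (mu : probability (borel_of X) R) (g : X -> R) (c : R) :
  continuous g -> (forall x, c <= g x)%R -> c%:E <= \int[mu]_x (g x)%:E.
Proof.
move=> cg c_le; rewrite -(integral_probability_cst mu).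
apply: le_integral => //.
- by apply: continuous_integrable; exact: cst_continuous.
- exact: continuous_integrable.
- by move=> x _; rewrite lee_fin.
Qed.

End compact_space.

Section invariant_measure.
Variables (R : realType) (X : pmetricType R) (f : X -> X).
Hypotheses (cX : compact [set: X]) (cf : continuous f).
Variable mu : probability (borel_of X) R.
Hypothesis mu_inv : invariant_measure f mu.
Local Open Scope ereal_scope.

Lemma integral_comp_invariant (g : X -> R) : continuous g ->
  \int[mu]_x (g (f x))%:E = \int[mu]_x (g x)%:E.
Proof.
move=> cg; have mf := continuous_measurable_map cf.
have /measurable_realfun.measurable_EFinP mg := continuous_measurable cg.
have cgf : continuous (g \o f) by move=> x; apply: continuous_comp; [exact: cf | exact: cg].
have := integral_pushforward mf mg (continuous_integrable cX mu cgf) measurableT.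
rewrite preimage_setT => <-.
by apply: eq_measure_integral => A mA _; exact: mu_inv.
Qed.

Lemma integral_comp_iter (g : X -> R) k : continuous g ->
  \int[mu]_x (g (iter k f x))%:E = \int[mu]_x (g x)%:E.
Proof.
move=> cg; elim: k => [//|k IH]; rewrite -IH.
rewrite -(integral_comp_invariant (continuous_comp_iter (k := k) cf cg)).
by apply: eq_integral => x _; rewrite -iterSr.
Qed.

Lemma integral_birkhoff (g : X -> R) n : continuous g ->
  \int[mu]_x (birkhoff f g n x)%:E = (n%:R)%:E * \int[mu]_x (g x)%:E.
Proof.
move=> cg; under eq_integral => x _ do rewrite /birkhoff -sumEFin.
rewrite integral_sum //; last first.
  by move=> k; exact: (continuous_integrable cX mu (continuous_comp_iter (k := k) cf cg)).
under eq_bigr => k _ do rewrite integral_comp_iter //.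
rewrite sumr_const card_ord.
have /fineK <- := integrable_fin_num measurableT (continuous_integrable cX mu cg).
by rewrite -EFinM mulr_natl EFin_natmul.
Qed.

Lemma integral_le_pressure (g : X -> R) : continuous g ->
  \int[mu]_x (g x)%:E <= pressure f g.
Proof.
move=> cg; have /fineK gE := integrable_fin_num measurableT (continuous_integrable cX mu cg).
rewrite -gE; apply: pressure_ge => n n_gt0.
have [x birkhoff_x] := integral_le_max cX mu (continuous_birkhoff (n := n) cf cg).
by exists x; rewrite -lee_fin EFinM gE -integral_birkhoff.
Qed.

End invariant_measure.

Lemma pressure_fin_num (R : realType) (X : pmetricType R) (f : X -> X) (phi : X -> R) :
  compact [set: X] -> continuous phi -> (htop f < +oo)%E ->
  pressure f phi \is a fin_num.
Proof.
move=> cX cphi htop_fin; have [M phiM] := continuous_bounded cX cphi.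
apply/fin_numPlt/andP; split.
  apply: (@lt_le_trans _ _ (- M)%:E); first exact: ltNyr.
  by apply: pressure_ge_cst => x; move: (phiM x) => /ler_normlP[]; rewrite lerNl.
apply: (@le_lt_trans _ _ (htop f + M%:E)).
  by apply: pressure_leD => x; rewrite add0r; apply: le_trans (phiM x); exact: ler_norm.
by move: htop_fin; case: (htop f) => // h _; exact: ltry.
Qed.

Lemma klipschitz_continuous (R : realType) (V W : normedModType R) (F : V -> W) k :
  k.-lipschitz F -> continuous F.
Proof.
move=> F_lip a; apply/cvgrPdist_le => e e_gt0.
have k1_gt0 : 0 < `|k| + 1 by rewrite ltr_wpDl.
have d_gt0 : 0 < e / (`|k| + 1) by rewrite divr_gt0.
apply: filterS (nbhsx_ballx a _ d_gt0) => b.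
rewrite -ball_normE /ball_ /= => /ltW ab_small.
apply: le_trans (F_lip (a, b) (conj I I)) _ => /=.
apply: le_trans (_ : (`|k| + 1) * `|a - b| <= _).
  by rewrite ler_wpM2r // (le_trans (ler_norm k)) // lerDl.
by rewrite -(divfK (lt0r_neq0 k1_gt0) e) mulrC ler_wpM2r // ltW.
Qed.

Section euclidean_norm.
Variables (R : realType) (d : nat).
Implicit Type q : 'rV[R]_d.

Lemma sqr_eucl_norm q : eucl_norm q ^+ 2 = \sum_(i < d) q ord0 i ^+ 2.
Proof. by rewrite sqr_sqrtr // sumr_ge0 // => i _; exact: sqr_ge0. Qed.

Lemma eucl_norm0 : eucl_norm (0 : 'rV[R]_d) = 0.
Proof. by rewrite /eucl_norm big1 ?sqrtr0 // => i _; rewrite mxE expr0n. Qed.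

Lemma eucl_normZ (c : R) q : eucl_norm (c *: q) = `|c| * eucl_norm q.
Proof.
rewrite /eucl_norm; under eq_bigr => i _ do rewrite mxE exprMn.
by rewrite -mulr_sumr sqrtrM ?sqr_ge0 // sqrtr_sqr.
Qed.

Lemma entry_le_eucl_norm q i : `|q ord0 i| <= eucl_norm q.
Proof.
rewrite /eucl_norm -sqrtr_sqr ler_sqrt ?sumr_ge0 // => [|j _]; last exact: sqr_ge0.
by rewrite (bigD1 i) //= lerDl sumr_ge0 // => j _; exact: sqr_ge0.
Qed.

Lemma entry_le_mx_norm q i : `|q ord0 i| <= `|q|.
Proof.
by rewrite [leRHS]/Num.norm /= mx_normrE; apply/bigmax_geP; right; exists (ord0, i).
Qed.

Lemma mx_norm_le_eucl_norm q : `|q| <= eucl_norm q.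
Proof.
rewrite [leLHS]/Num.norm /= mx_normrE; apply: bigmax_le => [|[a i] _].
  exact: sqrtr_ge0.
by rewrite /= (ord1 a); exact: entry_le_eucl_norm.
Qed.

End euclidean_norm.

Section pressure_minimum.
Variables (R : realType) (X : pmetricType R) (f : X -> X) (d : nat).
Variables (Xi : 'I_d -> X -> R) (xi0 : X -> R) (eps : R).
Hypotheses (cX : compact [set: X]) (cf : continuous f) (htop_fin : (htop f < +oo)%E).
Hypotheses (cXi : forall i, continuous (Xi i)) (cxi0 : continuous xi0).
Hypothesis eps_gt0 : 0 < eps.
Hypothesis ball_integrals : forall v : 'rV[R]_d, eucl_norm v <= eps ->
  exists mu : probability (borel_of X) R,
    invariant_measure f mu /\
    forall i : 'I_d, (\int[mu]_x (Xi i x)%:E)%E = (v ord0 i)%:E.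

Definition qpressure (q : 'rV[R]_d) : R := fine (pressure f (fun x => qdot q Xi x + xi0 x)).

Definition qbound : R := (qpressure 0 + sup_norm xi0) / eps.

Lemma continuous_qdot q : continuous (qdot q Xi).
Proof.
apply: continuous_sum => i x.
by apply: continuousM; [exact: cst_continuous | exact: cXi].
Qed.

Lemma qpressureE q : pressure f (fun x => qdot q Xi x + xi0 x) = (qpressure q)%:E.
Proof.
rewrite fineK // pressure_fin_num // => x.
by apply: continuousD; [exact: continuous_qdot | exact: cxi0].
Qed.

Lemma pressure_xi0E : pressure f xi0 = (qpressure 0)%:E.
Proof.
rewrite -qpressureE; congr pressure; apply/funext => x.
by rewrite /qdot big1 ?add0r // => i _; rewrite mxE mul0r.
Qed.

Lemma integral_qdot (mu : probability (borel_of X) R) (v : 'rV[R]_d) q :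
  (forall i, (\int[mu]_x (Xi i x)%:E)%E = (v ord0 i)%:E) ->
  (\int[mu]_x (qdot q Xi x)%:E)%E = (\sum_(i < d) q ord0 i * v ord0 i)%:E.
Proof.
move=> Xi_v; under eq_integral => x _ do rewrite /qdot -sumEFin.
rewrite integral_sum // -?sumEFin => [|i]; last first.
  apply: continuous_integrable => // x.
  by apply: continuousM; [exact: cst_continuous | exact: cXi].
apply: eq_bigr => i _; under eq_integral => x _ do rewrite EFinM.
by rewrite integralZl // ?Xi_v //; exact: continuous_integrable.
Qed.

(* Test against a measure whose [Xi]-integrals are [v], the point of the [eps]-sphere in
   the direction of [q] ([v = 0] when [q = 0], since [eps / 0 = 0]). *)
Lemma qpressure_ge q : eps * eucl_norm q - sup_norm xi0 <= qpressure q.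
Proof.
set N := eucl_norm q; pose v := (eps / N) *: q.
have N_ge0 : 0 <= N by exact: sqrtr_ge0.
have [|mu [mu_inv Xi_v]] := @ball_integrals v.
  rewrite eucl_normZ ger0_norm -/N; last by rewrite divr_ge0 // ltW.
  have [->|N_neq0] := eqVneq N 0; last by rewrite divfK.
  by rewrite mulr0; exact: ltW.
have qv : \sum_(i < d) q ord0 i * v ord0 i = eps * N.
  rewrite (eq_bigr (fun i => eps / N * q ord0 i ^+ 2)) => [|i _]; last first.
    by rewrite mxE expr2 mulrCA.
  rewrite -mulr_sumr -sqr_eucl_norm -/N expr2 mulrA.
  by have [->|/divfK ->] := eqVneq N 0; rewrite ?mulr0.
rewrite -lee_fin -qpressureE; apply: le_trans (integral_le_pressure cX cf mu_inv _); last first.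
  by move=> x; apply: continuousD; [exact: continuous_qdot | exact: cxi0].
under eq_integral => x _ do rewrite EFinD.
rewrite integralD //; last 2 first.
- by apply: continuous_integrable => //; exact: continuous_qdot.
- exact: continuous_integrable.
rewrite (integral_qdot _ Xi_v) qv EFinB leeD2l // integral_ge_cst // => x.
by move: (sup_norm_ge cX cxi0 x) => /ler_normlP[]; rewrite lerNl.
Qed.

Lemma qbound_ge0 : 0 <= qbound.
Proof.
apply: divr_ge0; last exact: ltW.
by have := qpressure_ge 0; rewrite eucl_norm0 mulr0 sub0r -subr_ge0 opprK.
Qed.

Lemma qpressure_gt q : qbound < eucl_norm q -> qpressure 0 < qpressure q.
Proof.
move=> q_large; apply: lt_le_trans (qpressure_ge q).
by rewrite ltrBrDr mulrC -ltr_pdivrMr.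
Qed.

Lemma qpressure_lipschitz : (\sum_(i < d) sup_norm (Xi i)).-lipschitz qpressure.
Proof.
suff le_qp a c : qpressure a <= qpressure c + (\sum_(i < d) sup_norm (Xi i)) * `|a - c|.
  move=> [a c] _.
  change (`|qpressure a - qpressure c| <= (\sum_(i < d) sup_norm (Xi i)) * `|a - c|).
  rewrite ler_norml; apply/andP; split.
    by rewrite lerNl opprB lerBlDl (distrC a c); exact: le_qp.
  by rewrite lerBlDl; exact: le_qp.
have : (pressure f (fun x => qdot a Xi x + xi0 x)%R <=
         pressure f (fun x => qdot c Xi x + xi0 x)%R +
         ((\sum_(i < d) sup_norm (Xi i)) * `|a - c|)%:E)%E.
  apply: pressure_leD => x.
  rewrite /qdot addrAC lerD2r mulr_suml -big_split /=; apply: ler_sum => i _.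
  rewrite -lerBlDl -mulrBl; apply: le_trans (ler_norm _) _; rewrite normrM mulrC.
  apply: ler_pM => //; first exact: sup_norm_ge.
  by have := entry_le_mx_norm (a - c) i; rewrite !mxE.
by rewrite !qpressureE -EFinD lee_fin.
Qed.

Lemma exists_qpressure_min :
  exists2 qb, eucl_norm qb <= qbound & forall q, qpressure qb <= qpressure q.
Proof.
(* [`|q|] is the sup norm of the normed structure on ['rV[R]_d], below [eucl_norm q]. *)
pose K := [set q : 'rV[R]_d | `|q| <= qbound].
have K0 : (0 : 'rV[R]_d) \in K by rewrite inE /K /= normr0 qbound_ge0.
have cK : compact K.
  apply: bounded_closed_compact.
    exists qbound; split; first exact: num_real.
    by move=> y /ltW y_large q Kq; exact: le_trans Kq y_large.
  exact: (proj1 (continuous_closedP _) (@norm_continuous _ _) _ (@closed_le _ qbound)).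
have cqp := klipschitz_continuous qpressure_lipschitz.
have [qb _ qb_min] := EVT_min_rV (ex_intro _ 0 (set_mem K0)) cK (continuous_subspaceT cqp).
have qb_le0 := qb_min 0 K0.
have qb_small : eucl_norm qb <= qbound.
  by rewrite leNgt; apply/negP => /qpressure_gt; rewrite ltNge qb_le0.
exists qb => [|q]; first exact: qb_small.
have [q_small|/qpressure_gt q_large] := leP (eucl_norm q) qbound.
  by apply: qb_min; rewrite inE; exact: le_trans (mx_norm_le_eucl_norm q) q_small.
exact: le_trans qb_le0 (ltW q_large).
Qed.

End pressure_minimum.

Theorem lemma4p5 (R : realType) (X : pmetricType R) (f : X -> X) (d : nat)
  (Xi : 'I_d -> X -> R) (xi0 : X -> R) (eps : R) :
  compact [set: X] ->
  continuous f ->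
  (htop f < +oo)%E ->
  (forall i, continuous (Xi i)) ->
  continuous xi0 ->
  0 < eps ->
  (forall v : 'rV[R]_d, eucl_norm v <= eps ->
     exists mu : probability (borel_of X) R,
       invariant_measure f mu /\
       forall i : 'I_d, (\int[mu]_x (Xi i x)%:E)%E = (v ord0 i)%:E) ->
  let P0 := ereal_inf [set pressure f (fun x => (qdot q Xi x + xi0 x)%R) | q in [set: 'rV[R]_d]] in
  let bound := ((pressure f xi0 + (sup_norm xi0)%:E) * (eps^-1)%:E)%E in
  (forall q : 'rV[R]_d, (bound < (eucl_norm q)%:E)%E ->
     (P0 < pressure f (fun x => (qdot q Xi x + xi0 x)%R))%E) /\
  (exists qb : 'rV[R]_d, ((eucl_norm qb)%:E <= bound)%E /\
     pressure f (fun x => (qdot qb Xi x + xi0 x)%R) = P0).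
Proof.
move=> cX cf htop_fin cXi cxi0 eps_gt0 ball_integrals P0 bound.
have qpE := qpressureE cX htop_fin cXi cxi0.
have [qb qb_small qb_min] :=
  exists_qpressure_min cX cf htop_fin cXi cxi0 eps_gt0 ball_integrals.
have boundE : bound = (qbound f Xi xi0 eps)%:E.
  by rewrite /bound (pressure_xi0E cX htop_fin cXi cxi0) -EFinD -EFinM.
have P0E : P0 = (qpressure f Xi xi0 qb)%:E.
  apply/eqP; rewrite eq_le; apply/andP; split.
    by apply: ereal_inf_lbound; exists qb; [by [] | exact: qpE].
  by apply: le_ereal_inf_tmp => _ [q _ <-]; rewrite qpE lee_fin; exact: qb_min.
rewrite boundE P0E; split => [q|]; last first.
  by exists qb; split; [rewrite lee_fin | exact: qpE].
rewrite qpE !lte_fin => /(qpressure_gt cX cf htop_fin cXi cxi0 eps_gt0 ball_integrals).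
exact: le_lt_trans (qb_min 0).
Qed.
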